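(* Let $M$ be a free $\mathbb{T}$-module with a finite $\mathbb{T}$-basis $\{\widehat m_1,\dots,\widehat m_n\}$, let $V=\{\sum_{l=1}^n x_l\widehat m_l : x_l\in\mathbb{C}(\mathbf{i_1})\}\subset M$, and let $(V^2,+_{V^2},\cdot_{V^2})$ be the $\mathbb{T}$-module defined below. Let $\{\widehat v_1,\dots,\widehat v_n\}$ be a basis of the vector space $V$ over $\mathbb{C}(\mathbf{i_1})$. Then $\{(\widehat v_l;\widehat v_l): l=1,\dots,n\}$ is a basis of the $\mathbb{T}$-module $V^2$ (so $V^2$ is free), and $\{\widehat v_1,\dots,\widehat v_n\}$ is a $\mathbb{T}$-basis of $M$.
   Context: Bicomplex numbers: $\mathbb{T}=\{z_1+z_2\mathbf{i_2}: z_1,z_2\in\mathbb{C}(\mathbf{i_1})\}$, where $\mathbb{C}(\mathbf{i_1})=\{x+y\mathbf{i_1}: x,y\in\mathbb{R}\}$, with $\mathbf{i_1}^2=\mathbf{i_2}^2=-1$, $\mathbf{i_1}\mathbf{i_2}=\mathbf{i_2}\mathbf{i_1}=\mathbf{j}$, $\mathbf{j}^2=1$; $\mathbb{T}$ is a commutative ring. The idempotents are $\mathbf{e_1}=(1+\mathbf{j})/2$, $\mathbf{e_2}=(1-\mathbf{j})/2$, with $\mathbf{e_1}^2=\mathbf{e_1}$, $\mathbf{e_2}^2=\mathbf{e_2}$, $\mathbf{e_1}\mathbf{e_2}=0$, $\mathbf{e_1}+\mathbf{e_2}=1$; every $\lambda\in\mathbb{T}$ is uniquely $\lambda=\lambda_1\mathbf{e_1}+\lambda_2\mathbf{e_2}$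 with $\lambda_1,\lambda_2\in\mathbb{C}(\mathbf{i_1})$. $V^2=\{(\widehat X;\widehat Y): \widehat X,\widehat Y\in V\}$ with addition $(\widehat X_1;\widehat Y_1)+_{V^2}(\widehat X_2;\widehat Y_2)=(\widehat X_1+\widehat X_2;\widehat Y_1+\widehat Y_2)$ and scalar multiplication $\lambda\cdot_{V^2}(\widehat X;\widehat Y)=(\lambda_1\widehat X;\lambda_2\widehat Y)$ for $\lambda=\lambda_1\mathbf{e_1}+\lambda_2\mathbf{e_2}$. *)

From HB Require Import structures.
From mathcomp Require Import all_boot all_order all_algebra.
From mathcomp Require Import complex.
From mathcomp Require Import reals.
From mathcomp Require Import ring.
Set Implicit Arguments. Unset Strict Implicit. Unset Printing Implicit Defensive.
Import Order.TTheory GRing.Theory Num.Theory.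
Local Open Scope ring_scope.

(* Bicomplex numbers z1 + z2 i2 with z1, z2 in a commutative ring K
   (K will be C(i1) = R[i], R the real numbers). *)
Record bicomplex (K : Type) : Type := BiC { bc1 : K; bc2 : K }.

Section Bicomplex.
Variable K : comNzRingType.
Local Notation T := (bicomplex K).

Definition bc_to_pair (x : T) : K * K := (bc1 x, bc2 x).
Definition bc_of_pair (p : K * K) : T := BiC p.1 p.2.
Lemma bc_pairK : cancel bc_to_pair bc_of_pair. Proof. by case. Qed.

HB.instance Definition _ := Choice.copy T (can_type bc_pairK).

Definition bc_add (x y : T) := BiC (bc1 x + bc1 y) (bc2 x + bc2 y).
Definition bc_opp (x : T) := BiC (- bc1 x) (- bc2 x).
Definition bc_zero : T := BiC 0 0.

Lemma bc_addA : associative bc_add.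
Proof. by move=> [a b] [c d] [e f]; rewrite /bc_add /= !addrA. Qed.
Lemma bc_addC : commutative bc_add.
Proof. by move=> [a b] [c d]; rewrite /bc_add /= (addrC a) (addrC b). Qed.
Lemma bc_add0 : left_id bc_zero bc_add.
Proof. by move=> [a b]; rewrite /bc_add /= !add0r. Qed.
Lemma bc_addN : left_inverse bc_zero bc_opp bc_add.
Proof. by move=> [a b]; rewrite /bc_add /= !addNr. Qed.

HB.instance Definition _ := GRing.isZmodule.Build T bc_addA bc_addC bc_add0 bc_addN.

(* (z1 + z2 i2)(w1 + w2 i2) = (z1 w1 - z2 w2) + (z1 w2 + z2 w1) i2 *)
Definition bc_mul (x y : T) :=
  BiC (bc1 x * bc1 y - bc2 x * bc2 y) (bc1 x * bc2 y + bc2 x * bc1 y).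
Definition bc_one : T := BiC 1 0.

Lemma bc_mulA : associative bc_mul.
Proof. by move=> [a b] [c d] [e f]; rewrite /bc_mul /=; congr BiC; ring. Qed.
Lemma bc_mulC : commutative bc_mul.
Proof. by move=> [a b] [c d]; rewrite /bc_mul /=; congr BiC; ring. Qed.
Lemma bc_mul1 : left_id bc_one bc_mul.
Proof. by move=> [a b]; rewrite /bc_mul /=; congr BiC; ring. Qed.
Lemma bc_mulDl : left_distributive bc_mul bc_add.
Proof. by move=> [a b] [c d] [e f]; rewrite /bc_mul /bc_add /=; congr BiC; ring. Qed.
Lemma bc_one_neq0 : bc_one != 0.
Proof. apply/negP => /eqP [] /eqP; by rewrite oner_eq0. Qed.

HB.instance Definition _ := GRing.Zmodule_isComNzRing.Build T
  bc_mulA bc_mulC bc_mul1 bc_mulDl bc_one_neq0.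

Definition bcK (z : K) : T := BiC z 0.
End Bicomplex.

Notation BC R := (bicomplex (complex R)).

Section Idempotents.
Variable R : realType.
Local Open Scope complex_scope.
Definition i1 : BC R := bcK 'i.
Definition i2 : BC R := BiC 0 1.
Definition jj : BC R := i1 * i2.
Definition e1 : BC R := bcK (2%:R^-1) * (1 + jj).
Definition e2 : BC R := bcK (2%:R^-1) * (1 - jj).
(* idempotent components: lambda = lambda1 e1 + lambda2 e2 with
   lambda1 = z1 - i1 z2 and lambda2 = z1 + i1 z2 for lambda = z1 + z2 i2 *)
Definition idem1 (l : BC R) : complex R := bc1 l - 'i * bc2 l.
Definition idem2 (l : BC R) : complex R := bc1 l + 'i * bc2 l.
End Idempotents.

Definition is_basis (S A : Type) (add : A -> A -> A) (zero : A)
    (scale : S -> A -> A) (s0 : S) (P : A -> Prop) (n : nat) (b : 'I_n -> A) :=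
  [/\ (forall i, P (b i)),
      (forall x, P x -> exists c : 'I_n -> S, x = \big[add/zero]_(i < n) scale (c i) (b i))
    & (forall c : 'I_n -> S, \big[add/zero]_(i < n) scale (c i) (b i) = zero ->
         forall i, c i = s0)].

Section Modules.
Variable R : realType.
Variable M : lmodType (BC R).

Definition T_basis n (b : 'I_n -> M) :=
  is_basis +%R 0 (fun l x => l *: x) 0 (fun _ => True) b.

Definition inV n (m : 'I_n -> M) (x : M) : Prop :=
  exists xs : 'I_n -> complex R, x = \sum_(l < n) bcK (xs l) *: m l.

Definition C_basis_V n (m : 'I_n -> M) k (b : 'I_k -> M) :=
  is_basis +%R 0 (fun (z : complex R) x => bcK z *: x) 0 (inV m) b.

Definition addV2 (p q : M * M) : M * M := (p.1 + q.1, p.2 + q.2).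
Definition zeroV2 : M * M := (0, 0).
Definition scaleV2 (l : BC R) (p : M * M) : M * M :=
  (bcK (idem1 l) *: p.1, bcK (idem2 l) *: p.2).
Definition inV2 n (m : 'I_n -> M) (p : M * M) : Prop := inV m p.1 /\ inV m p.2.

Definition T_basis_V2 n (m : 'I_n -> M) k (b : 'I_k -> M * M) :=
  is_basis addV2 zeroV2 scaleV2 0 (inV2 m) b.
End Modules.


Lemma idem_decomp (R : realType) (l : BC R) :
  l = bcK (idem1 l) * e1 R + bcK (idem2 l) * e2 R.
Proof.
have m1 (x y : BC R) : bc1 (x * y) = bc1 x * bc1 y - bc2 x * bc2 y by [].
have m2 (x y : BC R) : bc2 (x * y) = bc1 x * bc2 y + bc2 x * bc1 y by [].
have a1 (x y : BC R) : bc1 (x + y) = bc1 x + bc1 y by [].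
have a2 (x y : BC R) : bc2 (x + y) = bc2 x + bc2 y by [].
have n1 (x : BC R) : bc1 (- x) = - bc1 x by [].
have n2 (x : BC R) : bc2 (- x) = - bc2 x by [].
have o1 : bc1 (1 : BC R) = 1 by []. have o2 : bc2 (1 : BC R) = 0 by [].
have h : ('i : complex R) * 'i = -1 by apply/eqP; rewrite eq_complex /=; apply/andP; split; apply/eqP; ring.
have h2 : (2%:R : complex R) != 0 by rewrite pnatr_eq0.
case: l => a b; rewrite /e1 /e2 /jj /i1 /i2 /idem1 /idem2 /bcK.
congr BiC; rewrite ?(m1, m2, a1, a2, n1, n2, o1, o2) /=; by field: h.
Qed.

From HB Require Import structures.
From mathcomp Require Import all_boot all_order all_algebra.
From mathcomp Require Import complex reals ring.
Set Implicit Arguments.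
Unset Strict Implicit.
Unset Printing Implicit Defensive.
Import GRing.Theory Num.Theory.
Local Open Scope ring_scope.

(* Writing lambda = lambda1 e1 + lambda2 e2 identifies T with C(i1) x C(i1):
   lambda |-> lambda1 and lambda |-> lambda2 are ring morphisms, and the scalar
   action on V^2 is the componentwise one, so a C(i1)-basis of V gives a
   T-basis of V^2 at once.  Freeness of M on m makes V torsion-free over T,
   hence M = e1 V (+) e2 V; expanding both components in the basis v and
   recombining the coefficients as a e1 + b e2 shows that v is a T-basis
   of M. *)

Lemma bc_ext (K : Type) (x y : bicomplex K) :
  bc1 x = bc1 y -> bc2 x = bc2 y -> x = y.
Proof. by case: x y => [a b] [c d] /= -> ->. Qed.

Section BicomplexEmbedding.
Variable K : comNzRingType.

Fact bcK_is_zmod_morphism : zmod_morphism (@bcK K).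
Proof. by move=> x y; apply: bc_ext => /=; ring. Qed.

Fact bcK_is_monoid_morphism : monoid_morphism (@bcK K).
Proof. by split=> [|x y]; apply: bc_ext => /=; ring. Qed.

HB.instance Definition _ :=
  GRing.isZmodMorphism.Build K (bicomplex K) (@bcK K) bcK_is_zmod_morphism.
HB.instance Definition _ :=
  GRing.isMonoidMorphism.Build K (bicomplex K) (@bcK K) bcK_is_monoid_morphism.

End BicomplexEmbedding.

Section IdempotentComponents.
Variable R : realType.
Implicit Types (l : BC R) (a b : complex R).

Let ii : 'i * 'i = -1 :> complex R := mulCii _.

Fact idem1_is_zmod_morphism : zmod_morphism (@idem1 R).
Proof. by move=> [a b] [c d]; rewrite /idem1 /=; ring. Qed.

Fact idem1_is_monoid_morphism : monoid_morphism (@idem1 R).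
Proof. by split=> [|[a b] [c d]]; rewrite /idem1 /=; ring: ii. Qed.

Fact idem2_is_zmod_morphism : zmod_morphism (@idem2 R).
Proof. by move=> [a b] [c d]; rewrite /idem2 /=; ring. Qed.

Fact idem2_is_monoid_morphism : monoid_morphism (@idem2 R).
Proof. by split=> [|[a b] [c d]]; rewrite /idem2 /=; ring: ii. Qed.

HB.instance Definition _ :=
  GRing.isZmodMorphism.Build (BC R) (complex R) (@idem1 R) idem1_is_zmod_morphism.
HB.instance Definition _ :=
  GRing.isMonoidMorphism.Build (BC R) (complex R) (@idem1 R) idem1_is_monoid_morphism.
HB.instance Definition _ :=
  GRing.isZmodMorphism.Build (BC R) (complex R) (@idem2 R) idem2_is_zmod_morphism.
HB.instance Definition _ :=
  GRing.isMonoidMorphism.Build (BC R) (complex R) (@idem2 R) idem2_is_monoid_morphism.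

Lemma idem1_bcK a : idem1 (bcK a) = a.
Proof. by rewrite /idem1 /= mulr0 subr0. Qed.

Lemma idem2_bcK a : idem2 (bcK a) = a.
Proof. by rewrite /idem2 /= mulr0 addr0. Qed.

Lemma idem1_e1 : idem1 (e1 R) = 1.
Proof. by rewrite /idem1 /e1 /jj /i1 /i2 /=; field: ii. Qed.

Lemma idem2_e2 : idem2 (e2 R) = 1.
Proof. by rewrite /idem2 /e2 /jj /i1 /i2 /=; field: ii. Qed.

Lemma idem_inj l l' : idem1 l = idem1 l' -> idem2 l = idem2 l' -> l = l'.
Proof. by move=> h1 h2; rewrite (idem_decomp l) (idem_decomp l') h1 h2. Qed.

Definition bc_of_idem a b : BC R := bcK a * e1 R + bcK b * e2 R.

Lemma idem1_bc_of_idem a b : idem1 (bc_of_idem a b) = a.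
Proof. by rewrite /idem1 /bc_of_idem /e1 /e2 /jj /i1 /i2 /=; field: ii. Qed.

Lemma idem2_bc_of_idem a b : idem2 (bc_of_idem a b) = b.
Proof. by rewrite /idem2 /bc_of_idem /e1 /e2 /jj /i1 /i2 /=; field: ii. Qed.

Lemma mul_e1e1 : e1 R * e1 R = e1 R.
Proof. by apply: bc_ext; rewrite /e1 /jj /i1 /i2 /=; field: ii. Qed.

Lemma mul_e2e2 : e2 R * e2 R = e2 R.
Proof. by apply: bc_ext; rewrite /e2 /jj /i1 /i2 /=; field: ii. Qed.

Lemma mul_e1e2 : e1 R * e2 R = 0.
Proof. by apply: bc_ext; rewrite /e1 /e2 /jj /i1 /i2 /=; field: ii. Qed.

Lemma e1_neq0 : e1 R != 0.
Proof.
by apply: contra_neq (oner_neq0 (complex R)) => e0; rewrite -idem1_e1 e0 rmorph0.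
Qed.

Lemma e2_neq0 : e2 R != 0.
Proof.
by apply: contra_neq (oner_neq0 (complex R)) => e0; rewrite -idem2_e2 e0 rmorph0.
Qed.

Lemma mulr_bcK_eq0 l a : l != 0 -> l * bcK a = 0 -> a = 0.
Proof.
move=> l0 la0; apply/eqP; apply: contraNT l0 => a0; apply/eqP.
have idem_eq0 (f : {rmorphism BC R -> complex R}) : f (bcK a) = a -> f l = 0.
  move=> fa; have /eqP := congr1 f la0.
  by rewrite rmorphM rmorph0 fa mulf_eq0 (negbTE a0) orbF => /eqP.
apply: idem_inj; rewrite rmorph0; apply: idem_eq0.
  exact: idem1_bcK.
exact: idem2_bcK.
Qed.

End IdempotentComponents.

Section FreeBicomplexModule.
Variable R : realType.
Variable M : lmodType (BC R).

Lemma big_addV2 k (F : 'I_k -> M * M) :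
  \big[@addV2 R M/zeroV2 M]_(i < k) F i = (\sum_(i < k) (F i).1, \sum_(i < k) (F i).2).
Proof.
rewrite [LHS]surjective_pairing; congr pair.
  exact: (big_morph fst).
exact: (big_morph snd).
Qed.

Lemma sum_bc_of_idem_scale k (w : 'I_k -> M) (a b : 'I_k -> complex R) :
  \sum_(i < k) bc_of_idem (a i) (b i) *: w i =
  e1 R *: \sum_(i < k) bcK (a i) *: w i + e2 R *: \sum_(i < k) bcK (b i) *: w i.
Proof.
rewrite !scaler_sumr -big_split; apply: eq_bigr => i _.
by rewrite scalerDl !scalerA (mulrC (e1 R)) (mulrC (e2 R)).
Qed.

Lemma sum_scale_idem k (w : 'I_k -> M) (c : 'I_k -> BC R) :
  \sum_(i < k) c i *: w i =
  e1 R *: \sum_(i < k) bcK (idem1 (c i)) *: w i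
  + e2 R *: \sum_(i < k) bcK (idem2 (c i)) *: w i.
Proof.
by rewrite -sum_bc_of_idem_scale; apply: eq_bigr => i _; rewrite /bc_of_idem -idem_decomp.
Qed.

Variables (n : nat) (m : 'I_n -> M).

Lemma inV0 : inV m 0.
Proof. by exists (fun _ => 0); rewrite big1 // => i _; rewrite rmorph0 scale0r. Qed.

Lemma inVD x y : inV m x -> inV m y -> inV m (x + y).
Proof.
move=> [a ->] [b ->]; exists (fun l => a l + b l).
by rewrite -big_split; apply: eq_bigr => i _; rewrite rmorphD scalerDl.
Qed.

Lemma inVZ z x : inV m x -> inV m (bcK z *: x).
Proof.
move=> [a ->]; exists (fun l => z * a l).
by rewrite scaler_sumr; apply: eq_bigr => i _; rewrite rmorphM scalerA.
Qed.

Lemma inV_sum k (w : 'I_k -> M) (a : 'I_k -> complex R) :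
  (forall i, inV m (w i)) -> inV m (\sum_(i < k) bcK (a i) *: w i).
Proof.
move=> w_in; apply: (big_ind (inV m)); [exact: inV0 | exact: inVD | ].
by move=> i _; apply/inVZ/w_in.
Qed.

Lemma inV_gen i : inV m (m i).
Proof.
exists (fun l => (l == i)%:R); rewrite (bigD1 i) //= eqxx big1 ?addr0 ?rmorph1 ?scale1r //.
by move=> l /negbTE ->; rewrite rmorph0 scale0r.
Qed.

Hypothesis m_basis : T_basis m.

Lemma inV_scaler_eq0 l y : l != 0 -> inV m y -> l *: y = 0 -> y = 0.
Proof.
case: m_basis => _ _ m_free l0 [x ->] ly0.
have x0 i : x i = 0.
  apply: (mulr_bcK_eq0 l0); apply: (m_free (fun i => l * bcK (x i))).
  by rewrite -[RHS]ly0 scaler_sumr; apply: eq_bigr => j _; rewrite scalerA.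
by rewrite big1 // => i _; rewrite x0 rmorph0 scale0r.
Qed.

Lemma inV_e12_eq0 y1 y2 :
  inV m y1 -> inV m y2 -> e1 R *: y1 + e2 R *: y2 = 0 -> y1 = 0 /\ y2 = 0.
Proof.
move=> y1_in y2_in y0; split.
  apply: (inV_scaler_eq0 (e1_neq0 R) y1_in).
  have := congr1 (fun x => e1 R *: x) y0.
  by rewrite scalerDr !scalerA mul_e1e1 mul_e1e2 scale0r addr0 scaler0.
apply: (inV_scaler_eq0 (e2_neq0 R) y2_in).
have := congr1 (fun x => e2 R *: x) y0.
by rewrite scalerDr !scalerA mul_e2e2 mulrC mul_e1e2 scale0r add0r scaler0.
Qed.

Variables (k : nat) (v : 'I_k -> M).
Hypothesis v_basis : C_basis_V m v.

Lemma C_basis_T_basis_V2 : T_basis_V2 m (fun l => (v l, v l)).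
Proof.
case: v_basis => v_in v_span v_free; split.
- by move=> i; split; apply: v_in.
- move=> [x y] [/= /v_span [a ->] /v_span [b ->]].
  exists (fun i => bc_of_idem (a i) (b i)); rewrite big_addV2 /=.
  by congr pair; apply: eq_bigr => i _; rewrite ?idem1_bc_of_idem ?idem2_bc_of_idem.
- move=> c; rewrite big_addV2 => -[/v_free c1 /v_free c2] i.
  by apply: idem_inj; rewrite rmorph0; [apply: c1 | apply: c2].
Qed.

Lemma C_basis_T_basis : T_basis v.
Proof.
case: v_basis => v_in v_span v_free.
have inV_comb a : inV m (\sum_(i < k) bcK (a i) *: v i) by apply: inV_sum.
case: m_basis => _ m_span _; split=> //.
- move=> x _; have [c ->] := m_span x I; rewrite sum_scale_idem.
  have [a ->] := v_span _ (inV_sum (fun i => idem1 (c i)) inV_gen).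
  have [b ->] := v_span _ (inV_sum (fun i => idem2 (c i)) inV_gen).
  by exists (fun i => bc_of_idem (a i) (b i)); rewrite sum_bc_of_idem_scale.
- move=> c; rewrite sum_scale_idem => /(inV_e12_eq0 (inV_comb _) (inV_comb _)).
  move=> [/v_free c1 /v_free c2] i.
  by apply: idem_inj; rewrite rmorph0; [apply: c1 | apply: c2].
Qed.

End FreeBicomplexModule.

Theorem mainTheorem4 (R : realType) (M : lmodType (BC R)) (n : nat)
    (m : 'I_n -> M) (Hm : T_basis m)
    (v : 'I_n -> M) (Hv : C_basis_V m v) :
  T_basis_V2 m (fun l => (v l, v l)) /\ T_basis v.
Proof. by split; [exact: C_basis_T_basis_V2 Hv | exact: (C_basis_T_basis Hm Hv)]. Qed.
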